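(* For every integer $k\ge1$ and every $\tau\in T$: if $\mathfrak{h}(\tau)=k$ then $\rho(\tau)\ge\frac k2$; if $\mathfrak{r}(\tau)=k$ then $\rho(\tau)\ge k-\frac12$; if $\mathfrak{d}(\tau)=k$ then $\rho(\tau)\ge2^{k-1}-\frac12$. The same implications hold with $\tau$ replaced by $u\in U_f$ and $\mathfrak{h},\mathfrak{r},\mathfrak{d}$ replaced by $\mathfrak{h}',\mathfrak{r}',\mathfrak{d}'$.
   Context: Let $m\ge0$. $T$ is the set of $(m+1)$-colored rooted trees: the empty tree $\emptyset$ and all $\tau=[\tau_1,\dots,\tau_\kappa]_l$ with $l\in\{0,\dots,m\}$, $\kappa\ge0$, $\tau_1,\dots,\tau_\kappa\in T\setminus\{\emptyset\}$ (unordered), formed by joining the roots of the $\tau_j$ by edges to a new root of color $l$ ($\bullet_l$ when $\kappa=0$). Order: $\rho(\emptyset)=0$, $\rho([\tau_1,\dots,\tau_\kappa]_l)=\sum_j\rho(\tau_j)+1$ if $l=0$, and $=\sum_j\rho(\tau_j)+\frac12$ if $l\ge1$. $U_f$ is the set of trees $u=[\tau_1,\dots,\tau_\kappa]_f$ with $\kappa\ge0$, $\tau_j\in T\setminus\{\emptyset\}$ (a root labelled $f$), with $\rho(u)=\sum_j\rho(\tau_j)$; for $\mathfrak{g}:T\to\mathbb{N}$ put $\mathfrak{g}'(u)=\max_j\mathfrak{g}(\tau_j)$ (and $0$ for $\kappa=0$). Functions on $T$ (maxima over empty sets are $0$): height: $\mathfrak{h}(\emptyset)=0$, $\mathfrak{h}(\bullet_l)=1$,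 $\mathfrak{h}([\tau_1,\dots,\tau_\kappa]_l)=1+\max_j\mathfrak{h}(\tau_j)$; ramification: $\mathfrak{r}(\emptyset)=0$, $\mathfrak{r}(\bullet_l)=1$, $\mathfrak{r}([\tau_1]_l)=\mathfrak{r}(\tau_1)$, $\mathfrak{r}([\tau_1,\dots,\tau_\kappa]_l)=1+\max_j\mathfrak{r}(\tau_j)$ for $\kappa\ge2$; doubling index: $\mathfrak{d}(\emptyset)=0$, $\mathfrak{d}(\bullet_l)=1$, $\mathfrak{d}([\tau_1,\dots,\tau_\kappa]_l)=M$ if exactly one $i$ has $\mathfrak{d}(\tau_i)=M:=\max_j\mathfrak{d}(\tau_j)$, and $M+1$ if at least two indices $i$ have $\mathfrak{d}(\tau_i)=M$. *)

From mathcomp Require Import all_boot all_order all_algebra.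
Set Implicit Arguments. Unset Strict Implicit. Unset Printing Implicit Defensive.
Import Order.TTheory GRing.Theory Num.Theory.

(* Non-empty colored rooted trees: [Node l ts] = [ts_1,...,ts_k]_l.
   The list of children is ordered, but all functions below are invariant
   under permutation of the children, so this represents unordered trees. *)
Inductive ctree : Type := Node : nat -> seq ctree -> ctree.

(* A tree of T is [None] (the empty tree) or [Some t] with t non-empty. *)
Definition Ttree := option ctree.

Fixpoint colored (m : nat) (t : ctree) : bool :=
  match t with
  | Node l ts => (l <= m) &&
      (fix allc (s : seq ctree) : bool :=
         match s with [::] => true | t' :: s' => colored m t' && allc s' end) ts
  end.

Definition coloredT (m : nat) (t : Ttree) : bool :=
  if t is Some t' then colored m t' else true.

Fixpoint rho (t : ctree) : rat :=
  match t with
  | Node l ts =>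
      (fix sumr (s : seq ctree) : rat :=
         match s with [::] => 0 | t' :: s' => rho t' + sumr s' end) ts
      + (if l == 0%N then 1 else 1 / 2)%R
  end%R.

Definition rhoT (t : Ttree) : rat := if t is Some t' then rho t' else 0%R.

Definition maxl (s : seq nat) : nat := foldr maxn 0 s.

Fixpoint height (t : ctree) : nat :=
  match t with
  | Node _ ts =>
      (maxl ((fix mp (s : seq ctree) : seq nat :=
                match s with [::] => [::] | t' :: s' => height t' :: mp s' end) ts)).+1
  end.

Fixpoint ramif (t : ctree) : nat :=
  match t with
  | Node _ ts =>
      let rs := (fix mp (s : seq ctree) : seq nat :=
                   match s with [::] => [::] | t' :: s' => ramif t' :: mp s' end) ts in
      match rs with
      | [::] => 1
      | [:: r] => r
      | _ => (maxl rs).+1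
      end
  end.

Fixpoint dbl (t : ctree) : nat :=
  match t with
  | Node _ ts =>
      let ds := (fix mp (s : seq ctree) : seq nat :=
                   match s with [::] => [::] | t' :: s' => dbl t' :: mp s' end) ts in
      match ds with
      | [::] => 1
      | _ => let M := maxl ds in if (2 <= count_mem M ds)%N then M.+1 else M
      end
  end.

Definition heightT (t : Ttree) : nat := if t is Some t' then height t' else 0.
Definition ramifT (t : Ttree) : nat := if t is Some t' then ramif t' else 0.
Definition dblT (t : Ttree) : nat := if t is Some t' then dbl t' else 0.

(* Trees of U_f: u = [ts_1,...,ts_k]_f, represented by the list of children. *)
Definition Ftree := seq ctree.
Definition rhoU (u : Ftree) : rat := (\sum_(t <- u) rho t)%R.
(* g'(u) = max_j g(tau_j), 0 if no children *)
Definition primeU (g : ctree -> nat) (u : Ftree) : nat := maxl (map g u).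

(** Every vertex contributes at least [1/2] to [rho], so the order of a tree dominates
  each child's order.  Along the child realising the maximum, height and ramification
  grow by one only at the cost of another [1/2] (for ramification: a second child of
  the branching vertex).  The doubling index grows from [M] to [M+1] only at a vertex
  with two children of doubling index [M], so [rho] at least doubles:
  [2 (2^(M-1) - 1/2) + 1/2 = 2^M - 1/2].  For [u] in [U_f] the bounds transfer through
  the child realising [g'(u)]. *)

From mathcomp Require Import all_boot all_order all_algebra.
From mathcomp Require Import lra.
From Stdlib Require List.
Import Order.TTheory GRing.Theory Num.Theory.
Local Open Scope ring_scope.

Lemma maxl_map_attained {T : Type} (f : T -> nat) x (s : seq T) :
  exists2 y, List.In y (x :: s) & maxl (map f (x :: s)) = f y.
Proof.
elim: s x => [|y s IH] x /=; first by exists x; [left | rewrite maxn0].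
have [le_sx | lt_xs] := leqP (maxl (map f (y :: s))) (f x).
  by exists x; [left |].
by have [z sz ->] := IH y; exists z; [right |].
Qed.

Lemma count_mem_attained {T : Type} (f : T -> nat) M (s : seq T) :
  (0 < count_mem M (map f s))%N -> exists2 x, List.In x s & f x = M.
Proof.
elim: s => [//|x s IH] /=; have [<- _ | _] := eqP; first by exists x; [left |].
by move=> /IH [y sy fy]; exists y; [right |].
Qed.

Section HalfWeights.

Context {T : Type} {R : realFieldType} {w : T -> R}.
Hypothesis w_ge_half : forall x, 1 / 2 <= w x.

Lemma sum_ge_half_size (s : seq T) : (size s)%:R / 2 <= \sum_(x <- s) w x.
Proof.
elim: s => [|x s IH]; first by rewrite big_nil mul0r.
by rewrite big_cons /= -natr1; have := w_ge_half x; lra.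
Qed.

Lemma sum_ge_in {s : seq T} {x} : List.In x s ->
  w x + (size s).-1%:R / 2 <= \sum_(y <- s) w y.
Proof.
elim: s => [//|y s IH] /= [->|sx]; rewrite big_cons.
  by have := sum_ge_half_size s; lra.
case: s IH sx => [//|z s] IH /IH{IH} /=; rewrite [(size s).+1%:R]mulrSr.
by have := w_ge_half y; lra.
Qed.

Lemma sum_ge_mem {s : seq T} {x} : List.In x s -> w x <= \sum_(y <- s) w y.
Proof.
move=> /sum_ge_in; have : 0 <= (size s).-1%:R :> R := ler0n _ _; lra.
Qed.

Lemma sum_ge_two_count {f : T -> nat} {M} {s : seq T} :
  (2 <= count_mem M (map f s))%N ->
  exists x y, [/\ List.In x s, List.In y s, f x = M, f y = M &
                  w x + w y <= \sum_(z <- s) w z].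
Proof.
elim: s => [//|x s IH] /=; rewrite big_cons.
have [fxM | _] := eqP; last first.
  move=> /IH [y [z [sy sz fy fz le_s]]]; exists y, z.
  by split; [right | right | | |] => //; have := w_ge_half x; lra.
rewrite add1n ltnS => /count_mem_attained [y sy fy].
exists x, y; split; [left | right | | |] => //.
by have := sum_ge_mem sy; lra.
Qed.

End HalfWeights.

Lemma ctree_ind_in (P : ctree -> Prop) :
  (forall l ts, (forall t, List.In t ts -> P t) -> P (Node l ts)) ->
  forall t, P t.
Proof.
move=> IH; fix F 1 => -[l ts]; apply: IH; apply/List.Forall_forall.
exact: (fix G s : List.Forall P s :=
  match s return List.Forall P s with
  | [::] => List.Forall_nil P
  | t :: s' => List.Forall_cons t (F t) (G s')
  end) ts.
Qed.

Lemma fix_map_eq (g : ctree -> nat) (ts : seq ctree) :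
  (fix mp (s : seq ctree) : seq nat :=
     match s with [::] => [::] | t :: s' => g t :: mp s' end) ts = map g ts.
Proof. by elim: ts => //= t ts ->. Qed.

Lemma rho_node_ge l ts : \sum_(t <- ts) rho t + 1 / 2 <= rho (Node l ts).
Proof.
have -> : rho (Node l ts) = \sum_(t <- ts) rho t + (if l == 0%N then 1 else 1 / 2).
  by rewrite /=; congr (_ + _); elim: ts => [|t ts /= ->]; rewrite ?big_nil ?big_cons.
by case: (l == 0%N); lra.
Qed.

Lemma height_node l ts : height (Node l ts) = (maxl (map height ts)).+1.
Proof. by rewrite /= fix_map_eq. Qed.

Lemma ramif_node l ts : ramif (Node l ts) =
  match ts with [::] => 1%N | [:: t] => ramif t | _ => (maxl (map ramif ts)).+1 end.
Proof. by rewrite /= fix_map_eq; case: ts => [|t [|]]. Qed.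

Lemma dbl_node l ts : dbl (Node l ts) =
  if ts is [::] then 1%N else
  if (2 <= count_mem (maxl (map dbl ts)) (map dbl ts))%N
  then (maxl (map dbl ts)).+1 else maxl (map dbl ts).
Proof. by rewrite /= fix_map_eq; case: ts. Qed.

Lemma rho_ge_half t : 1 / 2 <= rho t.
Proof.
elim/ctree_ind_in: t => l ts IH; apply: le_trans (rho_node_ge l ts).
suff : 0 <= \sum_(t <- ts) rho t by lra.
elim: ts IH => [|t ts IHts] IH; rewrite ?big_nil ?big_cons //.
have := IH t (or_introl erefl); have := IHts (fun t' ts_t' => IH t' (or_intror ts_t')).
lra.
Qed.

Lemma rho_ge_height t : (height t)%:R / 2 <= rho t.
Proof.
elim/ctree_ind_in: t => l ts IH; rewrite height_node.
apply: le_trans (rho_node_ge l ts); rewrite -natr1.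
case: ts IH => [|t0 ts] IH; first by rewrite big_nil /maxl /=; lra.
have [t ts_t ->] := maxl_map_attained height t0 ts.
have := sum_ge_mem rho_ge_half ts_t; have := IH t ts_t; lra.
Qed.

Lemma rho_ge_ramif t : (ramif t)%:R - 1 / 2 <= rho t.
Proof.
elim/ctree_ind_in: t => l ts IH; rewrite ramif_node.
apply: le_trans (rho_node_ge l ts).
case: ts IH => [|t0 [|t1 ts]] IH.
- by rewrite big_nil; lra.
- by rewrite big_seq1; have := IH t0 (or_introl erefl); lra.
have [t ts_t ->] := maxl_map_attained ramif t0 (t1 :: ts).
have := sum_ge_in rho_ge_half ts_t; have := IH t ts_t.
rewrite /= [(ramif t).+1%:R]mulrSr [(size ts).+1%:R]mulrSr.
have : 0 <= (size ts)%:R :> rat := ler0n _ _; lra.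
Qed.

Lemma dbl_gt0 t : (0 < dbl t)%N.
Proof.
elim/ctree_ind_in: t => l [//|t0 ts] IH; rewrite dbl_node /=.
have [t ts_t max_t] := maxl_map_attained dbl t0 ts; rewrite /= in max_t.
rewrite max_t; case: ifP => // _; exact: IH.
Qed.

Lemma rho_ge_dbl t : (2 ^ (dbl t).-1)%:R - 1 / 2 <= rho t.
Proof.
elim/ctree_ind_in: t => l ts IH; rewrite dbl_node.
apply: le_trans (rho_node_ge l ts).
case: ts IH => [|t0 ts] IH; first by rewrite big_nil expn0; lra.
have [t ts_t ->] := maxl_map_attained dbl t0 ts.
case: ifP => [two_max | _].
  have [t1 [t2 [ts_t1 ts_t2 dbl_t1 dbl_t2]]] := sum_ge_two_count rho_ge_half two_max.
  have := IH t1 ts_t1; have := IH t2 ts_t2; rewrite dbl_t1 dbl_t2 -(prednK (dbl_gt0 t)) /=.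
  by rewrite expnS natrM; lra.
by have := sum_ge_mem rho_ge_half ts_t; have := IH t ts_t; lra.
Qed.

Lemma primeU_attained {g : ctree -> nat} {u : Ftree} : (0 < primeU g u)%N ->
  exists2 t, primeU g u = g t & rho t <= rhoU u.
Proof.
case: u => [//|t0 u] _; rewrite /primeU /rhoU.
have [t u_t ->] := maxl_map_attained g t0 u.
by exists t => //; have := sum_ge_mem rho_ge_half u_t; lra.
Qed.

Theorem mainTheorem6 (m k : nat) : (1 <= k)%N ->
  (forall tau : Ttree, coloredT m tau ->
     [/\ heightT tau = k -> (k%:R / 2 <= rhoT tau)%R,
         ramifT tau = k -> (k%:R - 1 / 2 <= rhoT tau)%R &
         dblT tau = k -> ((2 ^ k.-1)%:R - 1 / 2 <= rhoT tau)%R]) /\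
  (forall u : Ftree, all (colored m) u ->
     [/\ primeU height u = k -> (k%:R / 2 <= rhoU u)%R,
         primeU ramif u = k -> (k%:R - 1 / 2 <= rhoU u)%R &
         primeU dbl u = k -> ((2 ^ k.-1)%:R - 1 / 2 <= rhoU u)%R]).
Proof.
move=> k_gt0; split=> [[t|] _ | u _] /=.
- by split=> <-; [exact: rho_ge_height | exact: rho_ge_ramif | exact: rho_ge_dbl].
- by split=> k0; rewrite -k0 in k_gt0.
split=> gu_k; rewrite -gu_k in k_gt0 *; have [t -> le_u] := primeU_attained k_gt0;
  apply: le_trans le_u.
- exact: rho_ge_height.
- exact: rho_ge_ramif.
- exact: rho_ge_dbl.
Qed.
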